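(* Let $\theta,\omega:[0,\varepsilon[\times\mathbb S^1\to\mathbb R$ be of class $C^1$, and write $\bar\theta(t)=\theta(0,t)$, $\bar\omega(t)=\omega(0,t)$. For $\mu\in[0,1]$ let $\varphi^\mu(r,t)=\mu\,\omega(r,t)+(1-\mu)\,\theta(r,t)$. Suppose that $\bar\theta_t<-\lambda_t\sin(2\bar\theta)$ and $\bar\omega(t)=\bar\theta(t)$ for all $t\in\mathbb S^1$. Then there is $\rho_0>0$ such that for all $\mu\in[0,1]$ the surface $H^\mu(r,t)=(r\,u_{\varphi^\mu(r,t)},t)$ is transversal to the vector field $Y$ at all points $(r,t)$ with $0<r<\rho_0$, $t\in\mathbb S^1$.
   Context: $\mathbb S^1=\mathbb R/\mathbb Z$, $u_\beta=(\cos\beta,\sin\beta)\in\mathbb R^2$. In coordinates $(x,y,t)\in\mathbb D_\varepsilon\times\mathbb S^1$ around a period-1 hyperbolic periodic orbit $\Gamma=\{(0,0,t)\}$ of a Reeb flow (with $x$, $y$ axes along the unstable and stable directions), $Y$ is the reparametrization $Y=X/f_3$ of the Reeb vector field $X=(f_1,f_2,f_3)$, so that $Y(x,y,t)=(\lambda_tx,-\lambda_ty,1)+O(x^2+y^2)$ in the first two components and third component $1$, where $t\mapsto\lambda_t$ is a 1-periodic function. Subscripts $t$ and $r$ denote partial derivatives. *)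

From Stdlib Require Import Reals.
From Coquelicot Require Import Coquelicot.
Open Scope R_scope.

(* The half-closed cylinder [0,eps[ x R (R standing for the universal cover
   of S^1 = R/Z; functions on S^1 are 1-periodic functions on R). *)
Definition half_cyl (eps r t : R) : Prop := 0 <= r < eps.

Definition cont_on (D : R -> R -> Prop) (f : R -> R -> R) : Prop :=
  forall r t, D r t -> forall e, 0 < e -> exists d, 0 < d /\
    forall r' t', D r' t' -> Rabs (r' - r) < d -> Rabs (t' - t) < d ->
      Rabs (f r' t' - f r t) < e.

Definition periodic_on (eps : R) (f : R -> R -> R) : Prop :=
  forall r t, 0 <= r < eps -> f r (t + 1) = f r t.

Definition C1_half (eps : R) (f : R -> R -> R) : Prop :=
  periodic_on eps f /\
  cont_on (half_cyl eps) f /\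
  exists fr ft : R -> R -> R,
    (forall r t, 0 <= r < eps -> is_derive (fun t' => f r t') t (ft r t)) /\
    (forall r t, 0 < r < eps -> is_derive (fun r' => f r' t) r (fr r t)) /\
    cont_on (half_cyl eps) fr /\ cont_on (half_cyl eps) ft.

Definition phimu (mu : R) (theta omega : R -> R -> R) (r t : R) : R :=
  mu * omega r t + (1 - mu) * theta r t.

Definition H1 (phi : R -> R -> R) (r t : R) : R := r * cos (phi r t).
Definition H2 (phi : R -> R -> R) (r t : R) : R := r * sin (phi r t).
Definition H3 (phi : R -> R -> R) (r t : R) : R := t.

(* The vector field Y = (Y1, Y2, 1) is transversal to the surface H at the
   parameter point (r,t): the tangent plane span(H_r, H_t) together with
   Y(H(r,t)) spans R^3. *)
Definition transversal_at (Y1 Y2 : R -> R -> R -> R)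
    (phi : R -> R -> R) (r t : R) : Prop :=
  let x := H1 phi r t in let y := H2 phi r t in let z := H3 phi r t in
  let a1 := Derive (fun r' => H1 phi r' t) r in
  let a2 := Derive (fun r' => H2 phi r' t) r in
  let a3 := Derive (fun r' => H3 phi r' t) r in
  let b1 := Derive (fun t' => H1 phi r t') t in
  let b2 := Derive (fun t' => H2 phi r t') t in
  let b3 := Derive (fun t' => H3 phi r t') t in
  let c1 := Y1 x y z in let c2 := Y2 x y z in let c3 := 1 in
  forall v1 v2 v3 : R, exists a b c : R,
    v1 = a * a1 + b * b1 + c * c1 /\
    v2 = a * a2 + b * b2 + c * c2 /\
    v3 = a * a3 + b * b3 + c * c3.

From Stdlib Require Import Reals ZArith Lra Lia ClassicalEpsilon.
From Coquelicot Require Import Coquelicot.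
Open Scope R_scope.

(** Transversality of [H^mu] to [Y] at [(r,t)] is the non-vanishing of a 3x3
    determinant which, for [H(r,t) = (r u_phi, t)] and
    [Y = (lam x, -lam y, 1) + O(r^2)], expands as
    [r (phi_t + lam sin (2 phi)) + O(r^2)], the [O(r^2)] being controlled by
    [phi_r].  At [r = 0] every [phi^mu] and its [t]-derivative agree with those
    of [theta], so there the coefficient of [r] is the continuous periodic
    function [theta_t + lam sin (2 theta)] of [t]; it is negative, hence at most
    [-m < 0] by compactness of the circle.  Uniform continuity of the [C^1] data
    near the circle [r = 0] keeps the coefficient below [-m/2] and [phi^mu_r]
    bounded, uniformly in [mu] and [t], for small [r]; then the [O(r^2)] terms
    cannot change the sign. *)

Lemma sin_lipschitz a b : Rabs (sin a - sin b) <= Rabs (a - b).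
Proof.
  destruct (MVT_abs sin cos b a) as [c [-> _]].
  { intros c _. apply derivable_pt_lim_sin. }
  assert (Rabs (cos c) <= 1) by (apply Rabs_le; apply COS_bound).
  pose proof (Rabs_pos (a - b)). nra.
Qed.

Lemma convex_comb_close mu a b c d :
  0 <= mu <= 1 -> Rabs (a - c) < d -> Rabs (b - c) < d ->
  Rabs (mu * a + (1 - mu) * b - c) < d.
Proof.
  intros Hmu Ha Hb.
  replace (mu * a + (1 - mu) * b - c) with (mu * (a - c) + (1 - mu) * (b - c)) by ring.
  eapply Rle_lt_trans; [apply Rabs_triang|].
  rewrite !Rabs_mult, (Rabs_pos_eq mu), (Rabs_pos_eq (1 - mu)) by lra.
  destruct (Req_dec mu 0) as [->|Hmu0]; [lra|].
  assert (mu * Rabs (a - c) < mu * d) by (apply Rmult_lt_compat_l; lra).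
  pose proof (Rabs_pos (b - c)). nra.
Qed.

Lemma periodic_ind (P : R -> Prop) :
  (forall t, P (t + 1) <-> P t) -> (forall t, 0 <= t <= 1 -> P t) -> forall t, P t.
Proof.
  intros Hper H01.
  assert (Hnat : forall n t, P (t + INR n) <-> P t).
  { induction n as [|n IH]; intro t; [now rewrite Rplus_0_r|].
    now rewrite S_INR, <- Rplus_assoc, Hper. }
  assert (Hint : forall k t, P (t + IZR k) <-> P t).
  { intros k t. destruct (Z.le_ge_cases 0 k) as [Hk|Hk].
    - rewrite <- (Z2Nat.id k Hk), <- INR_IZR_INZ. apply Hnat.
    - replace k with (- Z.of_nat (Z.to_nat (- k)))%Z by lia.
      rewrite opp_IZR, <- INR_IZR_INZ, <- (Hnat (Z.to_nat (- k))).
      now replace (t + - INR _ + INR _) with t by ring. }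
  intro t. apply (Hint (- Int_part t)%Z), H01.
  rewrite opp_IZR. pose proof (base_Int_part t). lra.
Qed.

Lemma periodic_continuous_max (g : R -> R) :
  (forall t, g (t + 1) = g t) -> (forall t, continuity_pt g t) ->
  exists M, forall t, g t <= g M.
Proof.
  intros Hper Hcont.
  destruct (continuity_ab_maj g 0 1) as [M [HM _]]; [lra | intros; apply Hcont |].
  exists M. apply periodic_ind; [intro t; now rewrite Hper | exact HM].
Qed.

Lemma is_derive_periodic (h : R -> R) (t l : R) :
  (forall s, h (s + 1) = h s) -> is_derive h t l -> is_derive h (t + 1) l.
Proof.
  intros Hper Hd.
  apply (is_derive_ext (fun s => h (s - 1))).
  - intro s. rewrite <- (Hper (s - 1)). f_equal. ring.
  - replace l with (scal 1 l) by apply Rmult_1_l.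
    apply (is_derive_comp h (fun s => s - 1)); [|auto_derive; auto].
    now replace (t + 1 - 1) with t by ring.
Qed.

Lemma cont_on_slice eps f t : 0 < eps -> cont_on (half_cyl eps) f ->
  continuity_pt (fun s => f 0 s) t.
Proof.
  intros Heps Hf e He.
  destruct (Hf 0 t) with e as [d [Hd Hclose]]; [unfold half_cyl; lra | exact He |].
  exists d. split; [exact Hd|]. intros s [_ Hs]. simpl in *. unfold R_dist in *.
  apply Hclose; [unfold half_cyl; lra | rewrite Rminus_0_r, Rabs_R0; exact Hd | exact Hs].
Qed.

Lemma cont_on_unif_near_0_01 eps f : 0 < eps -> cont_on (half_cyl eps) f ->
  forall e, 0 < e -> exists d, 0 < d <= eps /\
    forall r t, 0 <= r < d -> 0 <= t <= 1 -> Rabs (f r t - f 0 t) < e.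
Proof.
  intros Heps Hf e He.
  assert (Hloc : forall t, exists d : posreal, forall r s, 0 <= r < d -> Rabs (s - t) < d ->
            Rabs (f r s - f 0 t) < e / 2).
  { intro t. destruct (Hf 0 t) with (e / 2) as [d [Hd Hclose]]; [unfold half_cyl; lra | lra |].
    exists (mkposreal _ (Rmin_pos _ _ Hd Heps)). simpl. intros r s Hr Hs.
    pose proof (Rmin_l d eps). pose proof (Rmin_r d eps).
    apply Hclose; [unfold half_cyl; lra | rewrite Rminus_0_r, Rabs_pos_eq | ]; lra. }
  set (delta t := proj1_sig (constructive_indefinite_description _ (Hloc t))).
  assert (Hdelta : forall t r s, 0 <= r < delta t -> Rabs (s - t) < delta t ->
            Rabs (f r s - f 0 t) < e / 2)
    by (intro t; exact (proj2_sig (constructive_indefinite_description _ (Hloc t)))).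
  (* A Lebesgue number [d] of the cover of [0,1] by the intervals of radius
     [delta t] makes the choice of [r] independent of [t]. *)
  destruct (compactness_value_1d 0 1 delta) as [d Hd].
  exists (Rmin d eps). split; [split; [apply Rmin_pos; [apply cond_pos | lra] | apply Rmin_r]|].
  intros r t Hr Ht. pose proof (Rmin_l d eps).
  destruct (Rlt_dec (Rabs (f r t - f 0 t)) e) as [Hlt|Hge]; [exact Hlt | exfalso].
  apply (Hd t Ht). intros [t0 [_ [Htt0 Hdt0]]].
  assert (Hfar : Rabs (f r t - f 0 t0) < e / 2) by (apply Hdelta; lra).
  assert (Hnear : Rabs (f 0 t - f 0 t0) < e / 2)
    by (apply Hdelta; [pose proof (cond_pos (delta t0)); lra | exact Htt0]).
  apply Hge. replace (f r t - f 0 t) with ((f r t - f 0 t0) - (f 0 t - f 0 t0)) by ring.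
  eapply Rle_lt_trans; [apply Rabs_triang|]. rewrite Rabs_Ropp. lra.
Qed.

Lemma cont_on_unif_near_0 eps f : 0 < eps -> periodic_on eps f -> cont_on (half_cyl eps) f ->
  forall e, 0 < e -> exists d, 0 < d /\
    forall r t, 0 <= r < d -> Rabs (f r t - f 0 t) < e.
Proof.
  intros Heps Hper Hf e He.
  destruct (cont_on_unif_near_0_01 eps f Heps Hf e He) as [d [Hd Hclose]].
  exists d. split; [lra|]. intros r t Hr. revert t.
  apply periodic_ind; [intro t; rewrite !Hper by lra; reflexivity | intros t Ht; now apply Hclose].
Qed.

Lemma cont_on_bounded_near_0 eps f : 0 < eps -> cont_on (half_cyl eps) f ->
  (forall r t, 0 < r < eps -> f r (t + 1) = f r t) ->
  exists K d, 0 < d /\ forall r t, 0 < r < d -> Rabs (f r t) <= K.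
Proof.
  intros Heps Hf Hper.
  destruct (continuity_ab_maj (fun s => Rabs (f 0 s)) 0 1) as [M [HM _]]; [lra | |].
  { intros t _. apply (continuity_pt_comp (fun s => f 0 s) Rabs);
      [now apply (cont_on_slice eps) | apply Rcontinuity_abs]. }
  destruct (cont_on_unif_near_0_01 eps f Heps Hf 1 Rlt_0_1) as [d [Hd Hclose]].
  exists (Rabs (f 0 M) + 1), d. split; [lra|]. intros r t Hr. revert t.
  apply periodic_ind; [intro t; rewrite Hper by lra; reflexivity|].
  intros t Ht. specialize (Hclose r t ltac:(lra) Ht). specialize (HM t Ht). simpl in HM.
  pose proof (Rabs_triang_inv (f r t) (f 0 t)). lra.
Qed.

Lemma periodic_on_dt eps f ft : periodic_on eps f ->
  (forall r t, 0 <= r < eps -> is_derive (fun t' => f r t') t (ft r t)) ->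
  periodic_on eps ft.
Proof.
  intros Hper Hd r t Hr.
  rewrite <- (is_derive_unique _ _ _ (Hd r (t + 1) Hr)).
  apply is_derive_unique, is_derive_periodic; [intro s; now apply Hper | now apply Hd].
Qed.

Lemma periodic_dr eps f fr : periodic_on eps f ->
  (forall r t, 0 < r < eps -> is_derive (fun r' => f r' t) r (fr r t)) ->
  forall r t, 0 < r < eps -> fr r (t + 1) = fr r t.
Proof.
  intros Hper Hd r t Hr.
  rewrite <- (is_derive_unique _ _ _ (Hd r t Hr)), <- (is_derive_unique _ _ _ (Hd r (t + 1) Hr)).
  apply Derive_ext_loc.
  apply (filter_imp (fun u => 0 < u /\ u < eps)); [intros u Hu; apply Hper; lra|].
  apply (open_and _ _ (open_gt 0) (open_lt eps)). lra.
Qed.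

Lemma Derive_mul_cos (a g : R -> R) (x da dg : R) :
  is_derive a x da -> is_derive g x dg ->
  Derive (fun s => a s * cos (g s)) x = da * cos (g x) - a x * sin (g x) * dg.
Proof.
  intros Ha Hg. apply is_derive_unique.
  auto_derive; [repeat split; [exists da | exists dg]; assumption|].
  replace (Derive (fun s => a s) x) with da by (symmetry; now apply is_derive_unique).
  replace (Derive (fun s => g s) x) with dg by (symmetry; now apply is_derive_unique). ring.
Qed.

Lemma Derive_mul_sin (a g : R -> R) (x da dg : R) :
  is_derive a x da -> is_derive g x dg ->
  Derive (fun s => a s * sin (g s)) x = da * sin (g x) + a x * cos (g x) * dg.
Proof.
  intros Ha Hg. apply is_derive_unique.
  auto_derive; [repeat split; [exists da | exists dg]; assumption|].
  replace (Derive (fun s => a s) x) with da by (symmetry; now apply is_derive_unique).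
  replace (Derive (fun s => g s) x) with dg by (symmetry; now apply is_derive_unique). ring.
Qed.

Lemma span3_of_det a1 a2 b1 b2 c1 c2 :
  a1 * (b2 - c2) - a2 * (b1 - c1) <> 0 ->
  forall v1 v2 v3, exists a b c,
    v1 = a * a1 + b * b1 + c * c1 /\ v2 = a * a2 + b * b2 + c * c2 /\
    v3 = a * 0 + b * 1 + c * 1.
Proof.
  set (D := a1 * (b2 - c2) - a2 * (b1 - c1)). intros HD v1 v2 v3.
  exists (((v1 - v3 * b1) * (b2 - c2) - (v2 - v3 * b2) * (b1 - c1)) / D),
    (v3 - (a2 * (v1 - v3 * b1) - a1 * (v2 - v3 * b2)) / D),
    ((a2 * (v1 - v3 * b1) - a1 * (v2 - v3 * b2)) / D).
  unfold D in *. split; [|split]; field; exact HD.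
Qed.

Lemma transversal_at_of_det (Y1 Y2 : R -> R -> R -> R) (phi : R -> R -> R) (r t pr pt : R) :
  is_derive (fun r' => phi r' t) r pr -> is_derive (fun t' => phi r t') t pt ->
  let p := phi r t in let x := r * cos p in let y := r * sin p in
  (cos p - y * pr) * (x * pt - Y2 x y t) - (sin p + x * pr) * (- (y * pt) - Y1 x y t) <> 0 ->
  transversal_at Y1 Y2 phi r t.
Proof.
  intros Hr Ht p x y Hdet.
  unfold transversal_at, H1, H2, H3. cbv zeta.
  rewrite (Derive_mul_cos (fun s => s) _ r 1 pr (is_derive_id r) Hr),
    (Derive_mul_sin (fun s => s) _ r 1 pr (is_derive_id r) Hr),
    (Derive_mul_cos (fun _ => r) _ t 0 pt (is_derive_const r t) Ht),
    (Derive_mul_sin (fun _ => r) _ t 0 pt (is_derive_const r t) Ht), Derive_const, Derive_id.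
  apply span3_of_det. fold p x y.
  contradict Hdet. rewrite <- Hdet. ring.
Qed.

Lemma polar_norm2 r p : (r * cos p) ^ 2 + (r * sin p) ^ 2 = r ^ 2.
Proof. rewrite <- (Rmult_1_r (r ^ 2)), <- (sin2_cos2 p). unfold Rsqr. ring. Qed.

Lemma transversal_det_neg r p pr pt l c1 c2 m L K C :
  0 < r <= 1 -> pt + l * sin (2 * p) <= - m -> Rabs l <= L -> Rabs pr <= K ->
  Rabs (c1 - l * (r * cos p)) <= C * r ^ 2 -> Rabs (c2 + l * (r * sin p)) <= C * r ^ 2 ->
  r * (L * K + 2 * (1 + K) * C) < m ->
  let x := r * cos p in let y := r * sin p in
  (cos p - y * pr) * (x * pt - c2) - (sin p + x * pr) * (- (y * pt) - c1) < 0.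
Proof.
  intros Hr Htwist Hl Hpr He1 He2 Hsmall x y.
  set (e1 := c1 - l * x) in He1. set (e2 := c2 + l * y) in He2.
  set (a1 := cos p - y * pr). set (a2 := sin p + x * pr).
  assert (Hsc : cos p * cos p + sin p * sin p = 1)
    by (rewrite <- (sin2_cos2 p); unfold Rsqr; ring).
  assert (Hexp : a1 * (x * pt - c2) - a2 * (- (y * pt) - c1)
                 = r * (pt + l * sin (2 * p)) + r ^ 2 * (l * pr * cos (2 * p))
                   + (a2 * e1 - a1 * e2)).
  { rewrite sin_2a, cos_2a. unfold a1, a2, e1, e2, x, y.
    transitivity (r * pt * (cos p * cos p + sin p * sin p) + r * l * (2 * sin p * cos p)
      + r * r * l * pr * (cos p * cos p - sin p * sin p) + (a2 * e1 - a1 * e2)); [|rewrite Hsc];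
    unfold a1, a2, e1, e2, x, y; ring. }
  assert (Hs : Rabs (sin p) <= 1) by (apply Rabs_le, SIN_bound).
  assert (Hc : Rabs (cos p) <= 1) by (apply Rabs_le, COS_bound).
  assert (Hc2 : Rabs (cos (2 * p)) <= 1) by (apply Rabs_le, COS_bound).
  assert (HK : 0 <= K) by (pose proof (Rabs_pos pr); lra).
  assert (HL : 0 <= L) by (pose proof (Rabs_pos l); lra).
  assert (Ha1 : Rabs a1 <= 1 + K).
  { unfold a1, y. eapply Rle_trans; [apply Rabs_triang|].
    rewrite Rabs_Ropp, !Rabs_mult, (Rabs_pos_eq r) by lra.
    assert (r * Rabs (sin p) <= 1) by (pose proof (Rabs_pos (sin p)); nra).
    pose proof (Rabs_pos (sin p)). pose proof (Rabs_pos pr). nra. }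
  assert (Ha2 : Rabs a2 <= 1 + K).
  { unfold a2, x. eapply Rle_trans; [apply Rabs_triang|].
    rewrite !Rabs_mult, (Rabs_pos_eq r) by lra.
    assert (r * Rabs (cos p) <= 1) by (pose proof (Rabs_pos (cos p)); nra).
    pose proof (Rabs_pos (cos p)). pose proof (Rabs_pos pr). nra. }
  assert (Hquad : Rabs (l * pr * cos (2 * p)) <= L * K).
  { rewrite !Rabs_mult, <- (Rmult_1_r (L * K)).
    apply Rmult_le_compat; auto using Rmult_le_pos, Rabs_pos.
    apply Rmult_le_compat; auto using Rabs_pos. }
  assert (Herr : Rabs (a2 * e1 - a1 * e2) <= 2 * (1 + K) * (C * r ^ 2)).
  { eapply Rle_trans; [apply Rabs_triang|]. rewrite Rabs_Ropp, !Rabs_mult.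
    assert (Rabs a2 * Rabs e1 <= (1 + K) * (C * r ^ 2))
      by (apply Rmult_le_compat; auto using Rabs_pos).
    assert (Rabs a1 * Rabs e2 <= (1 + K) * (C * r ^ 2))
      by (apply Rmult_le_compat; auto using Rabs_pos).
    lra. }
  rewrite Hexp. replace (r ^ 2) with (r * r) in * by ring.
  pose proof (Rle_abs (l * pr * cos (2 * p))). pose proof (Rle_abs (a2 * e1 - a1 * e2)).
  nra.
Qed.

Lemma transversal_at_of_bounds (Y1 Y2 : R -> R -> R -> R) (phi : R -> R -> R)
    (r t pr pt l m L K C : R) :
  is_derive (fun r' => phi r' t) r pr -> is_derive (fun t' => phi r t') t pt ->
  0 < r <= 1 -> pt + l * sin (2 * phi r t) <= - m -> Rabs l <= L -> Rabs pr <= K ->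
  (forall x y, x ^ 2 + y ^ 2 = r ^ 2 ->
     Rabs (Y1 x y t - l * x) <= C * r ^ 2 /\ Rabs (Y2 x y t + l * y) <= C * r ^ 2) ->
  r * (L * K + 2 * (1 + K) * C) < m ->
  transversal_at Y1 Y2 phi r t.
Proof.
  intros Hr Ht Hr01 Htwist Hl Hpr HY Hsmall.
  apply (transversal_at_of_det _ _ _ r t pr pt Hr Ht).
  destruct (HY _ _ (polar_norm2 r (phi r t))) as [HY1 HY2].
  apply Rlt_not_eq, (transversal_det_neg r _ pr pt l _ _ m L K C); assumption.
Qed.

Section PhiMu.

Variables (lam : R -> R) (eps : R) (theta omega thr tht omr omt : R -> R -> R).
Hypothesis lam_periodic : forall t, lam (t + 1) = lam t.
Hypothesis lam_continuous : forall t, continuity_pt lam t.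
Hypothesis eps_pos : 0 < eps.
Hypotheses (theta_periodic : periodic_on eps theta) (omega_periodic : periodic_on eps omega).
Hypotheses (theta_cont : cont_on (half_cyl eps) theta)
  (omega_cont : cont_on (half_cyl eps) omega).
Hypotheses
  (theta_dt : forall r t, 0 <= r < eps -> is_derive (fun t' => theta r t') t (tht r t))
  (omega_dt : forall r t, 0 <= r < eps -> is_derive (fun t' => omega r t') t (omt r t))
  (theta_dr : forall r t, 0 < r < eps -> is_derive (fun r' => theta r' t) r (thr r t))
  (omega_dr : forall r t, 0 < r < eps -> is_derive (fun r' => omega r' t) r (omr r t)).
Hypotheses (thr_cont : cont_on (half_cyl eps) thr) (tht_cont : cont_on (half_cyl eps) tht)
  (omr_cont : cont_on (half_cyl eps) omr) (omt_cont : cont_on (half_cyl eps) omt).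
Hypothesis twist : forall t, Derive (fun s => theta 0 s) t < - lam t * sin (2 * theta 0 t).
Hypothesis omega_theta_0 : forall t, omega 0 t = theta 0 t.

Lemma phimu_dr mu r t : 0 < r < eps ->
  is_derive (fun r' => phimu mu theta omega r' t) r (mu * omr r t + (1 - mu) * thr r t).
Proof.
  intro Hr. apply (is_derive_plus (fun r' => mu * omega r' t) (fun r' => (1 - mu) * theta r' t));
    apply is_derive_scal; auto.
Qed.

Lemma phimu_dt mu r t : 0 <= r < eps ->
  is_derive (fun t' => phimu mu theta omega r t') t (mu * omt r t + (1 - mu) * tht r t).
Proof.
  intro Hr. apply (is_derive_plus (fun t' => mu * omega r t') (fun t' => (1 - mu) * theta r t'));
    apply is_derive_scal; auto.
Qed.

Lemma lam_bounded : exists L, 0 <= L /\ forall t, Rabs (lam t) <= L.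
Proof.
  destruct (periodic_continuous_max (fun t => Rabs (lam t))) as [M HM].
  - intro t. now rewrite lam_periodic.
  - intro t. apply (continuity_pt_comp lam Rabs); [apply lam_continuous | apply Rcontinuity_abs].
  - exists (Rabs (lam M)). split; [apply Rabs_pos | exact HM].
Qed.

Lemma phimu_dr_bounded : exists K d, 0 <= K /\ 0 < d /\
  forall mu r t, 0 <= mu <= 1 -> 0 < r < d -> Rabs (mu * omr r t + (1 - mu) * thr r t) <= K.
Proof.
  destruct (cont_on_bounded_near_0 eps thr eps_pos thr_cont
    (periodic_dr eps theta thr theta_periodic theta_dr)) as [K1 [d1 [Hd1 HK1]]].
  destruct (cont_on_bounded_near_0 eps omr eps_pos omr_cont
    (periodic_dr eps omega omr omega_periodic omega_dr)) as [K2 [d2 [Hd2 HK2]]].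
  exists (Rabs K1 + Rabs K2 + 1), (Rmin d1 d2).
  split; [pose proof (Rabs_pos K1); pose proof (Rabs_pos K2); lra|].
  split; [now apply Rmin_pos|].
  intros mu r t Hmu Hr. pose proof (Rmin_l d1 d2). pose proof (Rmin_r d1 d2).
  apply Rlt_le. rewrite <- (Rminus_0_r (_ + _)).
  apply convex_comb_close; [exact Hmu | |]; rewrite Rminus_0_r.
  - pose proof (HK2 r t ltac:(lra)). pose proof (Rle_abs K2). pose proof (Rabs_pos K1). lra.
  - pose proof (HK1 r t ltac:(lra)). pose proof (Rle_abs K1). pose proof (Rabs_pos K2). lra.
Qed.

Lemma twist_margin :
  exists m, 0 < m /\ forall t, tht 0 t + lam t * sin (2 * theta 0 t) <= - m.
Proof.
  set (g t := tht 0 t + lam t * sin (2 * theta 0 t)).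
  destruct (periodic_continuous_max g) as [M HM].
  - intro t. unfold g.
    rewrite lam_periodic, (periodic_on_dt eps theta tht theta_periodic theta_dt),
      theta_periodic by lra.
    reflexivity.
  - intro t. unfold g. apply continuity_pt_plus; [now apply (cont_on_slice eps)|].
    apply continuity_pt_mult; [apply lam_continuous|].
    apply (continuity_pt_comp (fun s => 2 * theta 0 s) sin); [|apply continuity_sin].
    apply continuity_pt_scal. now apply (cont_on_slice eps).
  - exists (- g M). split.
    + specialize (twist M).
      replace (Derive (fun s => theta 0 s) M) with (tht 0 M) in twist
        by (symmetry; apply is_derive_unique, theta_dt; lra).
      unfold g. lra.
    + intro t. rewrite Ropp_involutive. apply HM.
Qed.

Lemma phimu_twist_near_0 : exists m d, 0 < m /\ 0 < d /\
  forall mu r t, 0 <= mu <= 1 -> 0 <= r < d ->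
    mu * omt r t + (1 - mu) * tht r t + lam t * sin (2 * phimu mu theta omega r t) <= - m.
Proof.
  destruct twist_margin as [m [Hm Hmargin]].
  destruct lam_bounded as [L [HL0 HL]].
  set (del := m / (2 * (1 + 2 * L))).
  assert (Hdel : 0 < del) by (unfold del; apply Rdiv_lt_0_compat; lra).
  assert (Hdel_m : del * (1 + 2 * L) = m / 2) by (unfold del; field; lra).
  pose proof (periodic_on_dt eps theta tht theta_periodic theta_dt) as tht_periodic.
  pose proof (periodic_on_dt eps omega omt omega_periodic omega_dt) as omt_periodic.
  assert (omt_tht_0 : forall t, omt 0 t = tht 0 t).
  { intro t. rewrite <- (is_derive_unique _ _ _ (theta_dt 0 t ltac:(lra))).
    symmetry. apply is_derive_unique, (is_derive_ext (fun s => omega 0 s));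
      [apply omega_theta_0 | apply omega_dt; lra]. }
  destruct (cont_on_unif_near_0 eps theta eps_pos theta_periodic theta_cont del Hdel)
    as [d1 [Hd1 Hc1]].
  destruct (cont_on_unif_near_0 eps omega eps_pos omega_periodic omega_cont del Hdel)
    as [d2 [Hd2 Hc2]].
  destruct (cont_on_unif_near_0 eps tht eps_pos tht_periodic tht_cont del Hdel)
    as [d3 [Hd3 Hc3]].
  destruct (cont_on_unif_near_0 eps omt eps_pos omt_periodic omt_cont del Hdel)
    as [d4 [Hd4 Hc4]].
  exists (m / 2), (Rmin (Rmin d1 d2) (Rmin d3 d4)).
  split; [lra|]. split; [repeat apply Rmin_pos; assumption|].
  intros mu r t Hmu Hr.
  destruct (Rmin_Rgt_l _ _ _ (proj2 Hr)) as [[Hr1 Hr2]%Rmin_Rgt_l [Hr3 Hr4]%Rmin_Rgt_l].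
  assert (Hp : Rabs (phimu mu theta omega r t - theta 0 t) < del).
  { apply convex_comb_close; [exact Hmu | rewrite <- omega_theta_0 | ];
      [apply Hc2 | apply Hc1]; lra. }
  assert (Hpt : Rabs (mu * omt r t + (1 - mu) * tht r t - tht 0 t) < del).
  { apply convex_comb_close; [exact Hmu | rewrite <- omt_tht_0 | ];
      [apply Hc4 | apply Hc3]; lra. }
  assert (Hsin : Rabs (lam t * (sin (2 * phimu mu theta omega r t) - sin (2 * theta 0 t)))
                 <= L * (2 * del)).
  { rewrite Rabs_mult. apply Rmult_le_compat; [apply Rabs_pos | apply Rabs_pos | apply HL |].
    eapply Rle_trans; [apply sin_lipschitz|].
    replace (2 * _ - 2 * _) with (2 * (phimu mu theta omega r t - theta 0 t)) by ring.
    rewrite Rabs_mult, Rabs_pos_eq by lra. lra. }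
  specialize (Hmargin t). apply Rabs_lt_between' in Hpt. apply Rabs_le_between in Hsin.
  lra.
Qed.

End PhiMu.

Theorem lemma3p3
  (lam : R -> R) (Y1 Y2 : R -> R -> R -> R) (eps : R)
  (theta omega : R -> R -> R) :
  (* t |-> lambda_t is a (continuous) 1-periodic function *)
  (forall t, lam (t + 1) = lam t) ->
  (forall t, continuity_pt lam t) ->
  (* Y(x,y,t) = (lam_t x, -lam_t y, 1) + O(x^2+y^2) in the first two components *)
  (exists C d, 0 < d /\ forall x y t, x ^ 2 + y ^ 2 < d ->
      Rabs (Y1 x y t - lam t * x) <= C * (x ^ 2 + y ^ 2) /\
      Rabs (Y2 x y t + lam t * y) <= C * (x ^ 2 + y ^ 2)) ->
  0 < eps ->
  C1_half eps theta -> C1_half eps omega ->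
  (forall t, Derive (fun s => theta 0 s) t < - lam t * sin (2 * theta 0 t)) ->
  (forall t, omega 0 t = theta 0 t) ->
  exists rho0, 0 < rho0 /\ rho0 <= eps /\
    forall mu, 0 <= mu <= 1 -> forall r t, 0 < r < rho0 ->
      transversal_at Y1 Y2 (phimu mu theta omega) r t.
Proof.
  intros lam_per lam_cont [C [dY [HdY HY]]] eps_pos
    [theta_per [theta_cont [thr [tht [theta_dt [theta_dr [thr_cont tht_cont]]]]]]]
    [omega_per [omega_cont [omr [omt [omega_dt [omega_dr [omr_cont omt_cont]]]]]]] Htwist Heq.
  destruct (lam_bounded lam lam_per lam_cont) as [L [HL0 HL]].
  destruct (phimu_dr_bounded eps theta omega thr omr) as [K [d1 [HK0 [Hd1 HK]]]]; try assumption.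
  destruct (phimu_twist_near_0 lam eps theta omega tht omt) as [m [d2 [Hm [Hd2 Htw]]]];
    try assumption.
  set (A := L * K + 2 * (1 + K) * Rabs C).
  assert (HA : 0 <= A) by (unfold A; pose proof (Rabs_pos C); nra).
  exists (Rmin (Rmin eps 1) (Rmin (Rmin d1 d2) (Rmin dY (m / (A + 1))))).
  split; [repeat apply Rmin_pos; try apply Rdiv_lt_0_compat; lra|].
  split; [apply Rle_trans with (Rmin eps 1); apply Rmin_l|].
  intros mu Hmu r t [Hr_pos Hr].
  destruct (Rmin_Rgt_l _ _ _ Hr) as [[Hr_eps Hr_1]%Rmin_Rgt_l
    [[Hr_d1 Hr_d2]%Rmin_Rgt_l [Hr_dY Hr_A]%Rmin_Rgt_l]%Rmin_Rgt_l].
  apply (transversal_at_of_bounds Y1 Y2 _ r t _ _ (lam t) m L K (Rabs C)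
    (phimu_dr eps theta omega thr omr theta_dr omega_dr mu r t ltac:(lra))
    (phimu_dt eps theta omega tht omt theta_dt omega_dt mu r t ltac:(lra))); try lra.
  - apply Htw; lra.
  - apply HL.
  - apply HK; lra.
  - intros x y Hxy. rewrite <- Hxy.
    destruct (HY x y t) as [HY1 HY2]; [rewrite Hxy; simpl; nra|].
    assert (C * (x ^ 2 + y ^ 2) <= Rabs C * (x ^ 2 + y ^ 2))
      by (apply Rmult_le_compat_r; [nra | apply Rle_abs]).
    lra.
  - assert (m / (A + 1) * (A + 1) = m) by (field; lra). fold A. nra.
Qed.
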